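(* Let $\eta_1,\dots,\eta_{d-1}$ satisfy $0<\eta_l<\zeta_l(\mu)$ for all $l$, and put $\eta=\min_{1\le l\le d-1}w_l\eta_l$. Then there is a constant $C>0$ such that for all $1\le l\le d-1$, $r\in\Xi$, $t>1$ and every nonzero decomposable $v=v_1\wedge\dots\wedge v_l\in V_l$, $$\int_{M_{m\times n}(\mathbb R)}\|g_tu(x)v\|^{-\eta_l}\,d\mu^{(r)}(x)\le C\,t^{-\eta}\|v\|^{-\eta_l}.$$
   Context: Let $m,n\ge1$, $d=m+n$, $a_1\ge\dots\ge a_m>0$, $b_1\ge\dots\ge b_n>0$, $\sum a_i=\sum b_j=1$. For $t>0$, $g_t=\mathrm{diag}(t^{a_1},\dots,t^{a_m},t^{-b_1},\dots,t^{-b_n})$; $u(\theta)=\begin{pmatrix}I_m&\theta\\0&I_n\end{pmatrix}$. For $1\le l\le d-1$, $w_l=a_m+\dots+a_{m+1-l}$ if $l\le m$ and $w_l=1-(b_1+\dots+b_{l-m})$ if $l>m$. $V_l=\bigwedge^l\mathbb R^d$ with $g$ acting by $\wedge^lg$; with $e_I=e_{i_1}\wedge\dots\wedge e_{i_l}$, write $v=\sum v_Ie_I$, $\|v\|=\max_I|v_I|$. $V_l^+=\mathrm{span}\{e_I:\#(I\cap\{1,\dots,m\})=\min\{l,m\}\}$, $\pi_{l+}$ the projection onto $V_l^+$ along the span of the other $e_I$. For each $i,j$, $\Phi_{ij}$ is a finite IFS on $\mathbb R$ of maps $x\mapsto c_{ij}x+w_{ij,e}$ with common ratio $c_{ij}\in(0,1)$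 satisfying the open set condition, with limit set $\mathcal K_{ij}$ of dimension $s_{ij}>0$; $\mu_{ij}$ is the normalised $s_{ij}$-dimensional Hausdorff measure on $\mathcal K_{ij}$, $\mu=\bigotimes\mu_{ij}$; $\Xi=\{r\in M_{m\times n}(\mathbb R):r_{ij}\in[c_{ij},c_{ij}^{-1}]\}$ and $\mu^{(r)}=\bigotimes\mu^{(r)}_{ij}$ with $\mu^{(r)}_{ij}$ the pushforward of $\mu_{ij}$ by $x\mapsto r_{ij}x$. The critical exponent $\zeta_l(\mu)$ is the supremum of $\gamma\ge0$ such that for some $C>0$, $\int\|\pi_{l+}(u(\theta)v)\|^{-\gamma}d\mu^{(r)}(\theta)<C$ for all decomposable $v\in V_l$ with $\|v\|=1$ and all $r\in\Xi$. *)

From HB Require Import structures.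
From mathcomp Require Import all_boot all_order all_algebra.
From mathcomp Require Import all_classical all_reals all_analysis.

Set Implicit Arguments.
Unset Strict Implicit.
Unset Printing Implicit Defensive.

Import Order.TTheory GRing.Theory Num.Theory.
Import numFieldNormedType.Exports.
Local Open Scope classical_set_scope.
Local Open Scope ring_scope.

Section IFS.
Variable R : realType.

Definition simil (c w : R) : R -> R := fun x => c * x + w.

Definition OSC (N : nat) (c : R) (w : 'I_N -> R) : Prop :=
  exists V : set R, [/\ open V, V !=set0,
    (forall e, simil c (w e) @` V `<=` V) &
    (forall e e', e != e' -> (simil c (w e) @` V) `&` (simil c (w e') @` V) = set0)].

(* K is the limit set (attractor) of the IFS: the nonempty compact set
   invariant under the Hutchinson operator (unique by Hutchinson). *)
Definition limit_set (N : nat) (c : R) (w : 'I_N -> R) (K : set R) : Prop :=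
  [/\ compact K, K !=set0 & K = \bigcup_(e in [set: 'I_N]) (simil c (w e) @` K)].

Local Open Scope ereal_scope.

Definition ediam (U : set R) : \bar R :=
  ereal_sup [set (`|(x - y)%R|)%:E | x in U & y in U].

Definition dpow (s : R) (U : set R) : \bar R :=
  if U == set0 then 0 else ediam U `^ s.

Definition hausdorff_delta (s delta : R) (A : set R) : \bar R :=
  ereal_inf [set \sum_(0 <= k <oo) dpow s (U k) |
    U in [set U : nat -> set R |
      A `<=` \bigcup_k U k /\ forall k, ediam (U k) <= delta%:E]].

Definition hausdorff (s : R) (A : set R) : \bar R :=
  ereal_sup [set hausdorff_delta s delta A | delta in [set delta : R | (0 < delta)%R]].

Definition hdim (A : set R) : \bar R :=
  ereal_inf [set s%:E | s in [set s : R | (0 <= s)%R /\ hausdorff s A = 0]].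

Definition normalised_hausdorff (s : R) (K : set R) (mu : set R -> \bar R) : Prop :=
  forall A : set R, measurable A -> mu A = hausdorff s (A `&` K) * (hausdorff s K)^-1.

End IFS.

Definition Mat (R : realType) (m n : nat) := 'M[R]_(m, n).
HB.instance Definition _ (R : realType) m n := isPointed.Build (Mat R m n) 0.

Definition rects (R : realType) (m n : nat) : set (set (Mat R m n)) :=
  [set [set x : Mat R m n | forall i j, A i j (x i j)] |
     A in [set A : 'I_m -> 'I_n -> set R | forall i j, measurable (A i j)]].

Definition MatM (R : realType) (m n : nat) := g_sigma_algebraType (@rects R m n).

Definition is_product_measure (R : realType) (m n : nat)
  (nu : 'I_m -> 'I_n -> set R -> \bar R) (P : set (MatM R m n) -> \bar R) : Prop :=
  forall A : 'I_m -> 'I_n -> set R, (forall i j, measurable (A i j)) ->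
    P [set x : MatM R m n | forall i j, A i j (x i j)] =
      (\prod_(i < m) \prod_(j < n) nu i j (A i j))%E.

Section Exterior.
Variable R : realType.

(* e_I with I = {s 0 < s 1 < ... < s (l-1)} is indexed by increasing s *)
Definition incr (l d : nat) (s : {ffun 'I_l -> 'I_d}) : bool :=
  [forall i : 'I_l, forall j : 'I_l, (i < j)%N ==> (s i < s j)%N].

(* an element of V_l, given by its coordinates v_I (only increasing s matter) *)
Definition Vl (d l : nat) := {ffun 'I_l -> 'I_d} -> R.

(* coordinates of v_1 /\ ... /\ v_l, where v_k is the k-th column of A *)
Definition wedge (d l : nat) (A : 'M[R]_(d, l)) : Vl d l :=
  fun s => \det (\matrix_(i < l, j < l) A (s i) j).

Definition ext_act (d l : nat) (g : 'M[R]_d) (v : Vl d l) : Vl d l :=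
  fun s => \sum_(s' : {ffun 'I_l -> 'I_d} | incr s')
             \det (\matrix_(i < l, j < l) g (s i) (s' j)) * v s'.

Definition decomposable (d l : nat) (v : Vl d l) : Prop :=
  exists A : 'M[R]_(d, l), forall s, incr s -> v s = wedge A s.

Definition vnonzero (d l : nat) (v : Vl d l) : Prop :=
  exists s, incr s /\ v s != 0.

Definition vnorm (d l : nat) (v : Vl d l) : R :=
  \big[Num.max/0]_(s : {ffun 'I_l -> 'I_d} | incr s) `|v s|.

Definition proj_plus (m n l : nat) (v : Vl (m + n) l) : Vl (m + n) l :=
  fun s => if #|[set k : 'I_l | (s k < m)%N]| == minn l m then v s else 0.

End Exterior.

Section Flow.
Variables (R : realType) (m n : nat).

Definition gt (a : 'I_m -> R) (b : 'I_n -> R) (t : R) : 'M[R]_(m + n) :=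
  diag_mx (\row_k match fintype.split k with
                  | inl i => t `^ (a i)
                  | inr j => t `^ (- b j) end).

Definition uu (theta : 'M[R]_(m, n)) : 'M[R]_(m + n) :=
  block_mx 1%:M theta 0 1%:M.

Definition weight (a : 'I_m -> R) (b : 'I_n -> R) (l : nat) : R :=
  if (l <= m)%N then \sum_(i < m | (m - l <= i)%N) a i
  else 1 - \sum_(j < n | (j < l - m)%N) b j.

Definition negpow (x gamma : R) : \bar R :=
  if x == 0 then (if gamma == 0 then 1%E else +oo%E) else (x `^ (- gamma))%:E.

Definition Xi (c : 'I_m -> 'I_n -> R) : set 'M[R]_(m, n) :=
  [set r | forall i j, c i j <= r i j <= (c i j)^-1].

(* critical exponent zeta_l(mu); P r is the product measure mu^(r) *)
Definition crit_exp (c : 'I_m -> 'I_n -> R)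
  (P : 'M[R]_(m, n) -> set (MatM R m n) -> \bar R) (l : nat) : \bar R :=
  ereal_sup [set gamma%:E | gamma in [set gamma : R | 0 <= gamma /\
    exists C : R, 0 < C /\
      forall r, Xi c r -> forall v : Vl R (m + n) l, decomposable v -> vnorm v = 1 ->
        (\int[P r]_(theta in setT)
           negpow (vnorm (proj_plus (ext_act (uu theta) v))) gamma < C%:E)%E]].

End Flow.

From HB Require Import structures.
From mathcomp Require Import all_boot all_order all_algebra.
From mathcomp Require Import all_classical all_reals all_analysis.
From mathcomp Require Import zify.
Import Order.TTheory GRing.Theory Num.Theory.
Import numFieldNormedType.Exports HBNNSimple measurable_realfun.
Local Open Scope classical_set_scope.
Local Open Scope ring_scope.
Set Implicit Arguments.
Unset Strict Implicit.
Unset Printing Implicit Defensive.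

(* On a basis vector e_I of V_l^+ the flow g_t acts by
   t^(sum of the exponents a_i, -b_j indexed by I), and this sum is at least w_l:
   compare the increasing enumeration of I term by term with the extremal index set
   (the last l of the first m indices when l <= m, otherwise the first m indices
   followed by the first l - m of the last n), using that a and b are nonincreasing.
   Hence ||g_t u(x) v|| >= t^(w_l) ||pi_{l+}(u(x) v)||.  Normalising v and using
   y^(-eta_l) <= 1 + y^(-gamma) for some eta_l < gamma < zeta_l, the bound defining
   zeta_l gives the estimate with the decay t^(-w_l eta_l) <= t^(-eta). *)

Section NonnegIntegral.
Context d (T : measurableType d) (R : realType).
Local Open Scope ereal_scope.

(* No measurability is needed: the integral of a nonnegative function is the
   supremum of the integrals of the simple functions below it. *)
Lemma le_integral_ge0 (mu : {measure set T -> \bar R}) (f g : T -> \bar R) :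
  (forall x, 0 <= f x) -> (forall x, f x <= g x) ->
  \int[mu]_x f x <= \int[mu]_x g x.
Proof.
move=> f0 fg; have g0 x : 0 <= g x by apply: le_trans (f0 x) (fg x).
rewrite !ge0_integralTE //; apply: ereal_sup_le => _ [h hf <-].
by exists h => //= x; apply: le_trans (hf x) (fg x).
Qed.

(* Each simple function h <= F yields the measurable minorant max(h/k - 1, 0) of G. *)
Lemma integral_le_affine (mu : probability T R) (F G : T -> \bar R) (k : R) :
  (0 < k)%R -> (forall x, 0 <= F x) -> (forall x, 0 <= G x) ->
  (forall x, F x <= k%:E * (1 + G x)) ->
  \int[mu]_x F x <= k%:E * (1 + \int[mu]_x G x).
Proof.
move=> k0 F0 G0 FG; rewrite ge0_integralTE //.
apply: ge_ereal_sup => _ [h hF <-] /=; rewrite -integralT_nnsfun.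
pose h' x := Num.max (h x / k - 1)%R 0%R.
have h'0 x : (0 <= h' x)%R by rewrite le_max lexx orbT.
have mh' : measurable_fun setT h'.
  apply: measurable_maxr; last exact: measurable_cst.
  apply: measurable_funB; last exact: measurable_cst.
  by apply: measurable_funM; [exact: measurable_funPT|exact: measurable_cst].
have h_le x : (h x)%:E <= k%:E * (1 + (h' x)%:E).
  rewrite -EFinD -EFinM lee_fin -ler_pdivrMl // addrC -lerBlDr mulrC.
  by rewrite le_max lexx.
have h'_le x : (h' x)%:E <= G x.
  rewrite /h'; have [_|hk] := leP (h x / k - 1)%R 0%R; first exact: G0.
  have := le_trans (hF x) (FG x); case: (G x) (G0 x) => [g _| _ _|//]; last by rewrite leey.
  by rewrite -EFinD -EFinM !lee_fin lerBlDl ler_pdivrMr // mulrC addrC.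
have m1h' : measurable_fun setT (fun x => 1 + (h' x)%:E).
  by apply: emeasurable_funD; [exact: measurable_cst|apply/measurable_EFinP].
apply: (@le_trans _ _ (\int[mu]_x (k%:E * (1 + (h' x)%:E)))).
  apply: ge0_le_integral => //.
  - by move=> x _; rewrite lee_fin.
  - by apply/measurable_EFinP; exact: measurable_funPT.
  - by apply: emeasurable_funM => //; exact: measurable_cst.
rewrite ge0_integralZl_EFin ?(ltW k0) //; last by move=> x _; rewrite adde_ge0 ?lee_fin.
rewrite lee_pmul2l ?lte_fin // ge0_integralD //; last 2 first.
- by move=> x _; rewrite lee_fin.
- exact/measurable_EFinP.
rewrite integral_cst // mul1e; set M := (X in X + _).
have -> : M = 1 by exact: probability_setT.
rewrite leeD2l //.
by apply: le_integral_ge0 => // x; rewrite lee_fin.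
Qed.

End NonnegIntegral.

Lemma big_ord_cast_split (V : nmodType) N p q (e : (p + q = N)%N) (F : 'I_N -> V) :
  \sum_(i < N) F i =
  \sum_(i < p) F (cast_ord e (lshift q i)) + \sum_(k < q) F (cast_ord e (rshift p k)).
Proof.
by case: N / e F => F; rewrite big_split_ord; congr (_ + _); apply: eq_bigr => i _;
  rewrite cast_ord_id.
Qed.

Section IncreasingIndex.
Variables (l N : nat) (s : {ffun 'I_l -> 'I_N}).
Hypothesis s_incr : incr s.

Lemma incr_lt (i j : 'I_l) : (i < j)%N -> (s i < s j)%N.
Proof. by move=> ij; move/forallP: s_incr => /(_ i) /forallP /(_ j) /implyP; apply. Qed.

Lemma incr_gap (i j : 'I_l) : (i <= j)%N -> (s i + (j - i) <= s j)%N.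
Proof.
move=> ij; suff gap d (k : 'I_l) : (i + d)%N = k -> (s i + d <= s k)%N.
  by apply: gap; rewrite subnKC.
elim: d k => [k|d IHd k e]; first by rewrite !addn0 => /val_inj ->.
have lt_id : (i + d < l)%N by rewrite (leq_ltn_trans _ (ltn_ord k)) // -e leq_add2l.
apply: leq_trans (incr_lt (_ : Ordinal lt_id < k)%N); last by rewrite /= -e ltn_add2l.
by rewrite addnS ltnS IHd.
Qed.

Lemma incr_ge (k : 'I_l) : (k <= s k)%N.
Proof.
have l0 : (0 < l)%N by apply: leq_ltn_trans (ltn_ord k).
by move: (incr_gap (leq0n k : (Ordinal l0 <= k)%N)) => /=; lia.
Qed.

Lemma incr_lt_countE p : #|[set k | (s k < p)%N]%SET| = minn l p ->
  forall k : 'I_l, (s k < p)%N = (k < minn l p)%N.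
Proof.
move=> count_p.
have sub : [set k | (s k < p)%N]%SET \subset [set k : 'I_l | (k < minn l p)%N]%SET.
  apply/fintype.subsetP => k; rewrite !inE leq_min ltn_ord.
  by apply: leq_ltn_trans; exact: incr_ge.
have card_min : #|[set k : 'I_l | (k < minn l p)%N]%SET| = minn l p.
  by rewrite cardsE -sum1_card big_ord_narrow ?geq_minl // sum1_card card_ord.
move: sub; rewrite subEproper properEcard count_p card_min ltnn andbF orbF => /eqP E k.
by move/setP: E => /(_ k); rewrite !inE.
Qed.

End IncreasingIndex.

Section ExteriorNorm.
Variable R : realType.

Lemma vnorm_ge0 d l (v : Vl R d l) : 0 <= vnorm v.
Proof. by rewrite /vnorm; elim/big_ind: _ => // x y hx hy; rewrite le_max hx. Qed.

Lemma normr_le_vnorm d l (v : Vl R d l) s : incr s -> `|v s| <= vnorm v.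
Proof. by move=> hs; rewrite /vnorm; apply: le_bigmax_cond. Qed.

Lemma vnorm_le d l (v : Vl R d l) c : 0 <= c ->
  (forall s, incr s -> `|v s| <= c) -> vnorm v <= c.
Proof. by move=> c0 h; rewrite /vnorm; apply: bigmax_le. Qed.

Lemma vnorm_gt0 d l (v : Vl R d l) : vnonzero v -> 0 < vnorm v.
Proof.
by case=> s [hs v0]; apply: (lt_le_trans _ (normr_le_vnorm v hs)); rewrite normr_gt0.
Qed.

Lemma vnormZ d l (v : Vl R d l) c : 0 <= c -> vnorm (fun s => v s * c) = vnorm v * c.
Proof.
move=> c0; apply/eqP; rewrite eq_le; apply/andP; split.
  apply: vnorm_le => [|s hs]; first by rewrite mulr_ge0 ?vnorm_ge0.
  by rewrite normrM (ger0_norm c0) ler_wpM2r // normr_le_vnorm.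
have [->|c_gt0] := eqVneq c 0; first by rewrite mulr0 vnorm_ge0.
rewrite -ler_pdivlMr ?lt_def ?c_gt0 //; apply: vnorm_le => [|s hs].
  by rewrite divr_ge0 ?vnorm_ge0.
rewrite ler_pdivlMr ?lt_def ?c_gt0 //.
by have := normr_le_vnorm (fun s => v s * c) hs; rewrite normrM (ger0_norm c0).
Qed.

Lemma ext_actZ d l (U : 'M[R]_d) (v : Vl R d l) c :
  ext_act U (fun s => v s * c) = (fun s => ext_act U v s * c).
Proof.
by apply/funext => s; rewrite /ext_act mulr_suml; apply: eq_bigr => s' _; rewrite mulrA.
Qed.

Lemma proj_plusZ m n l (v : Vl R (m + n) l) c :
  proj_plus (fun s => v s * c) = (fun s => proj_plus v s * c).
Proof. by apply/funext => s; rewrite /proj_plus; case: ifP; rewrite ?mul0r. Qed.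

Lemma ext_act_diag_mul d l (dg : 'rV[R]_d) (U : 'M[R]_d) (v : Vl R d l) s :
  ext_act (diag_mx dg *m U) v s = (\prod_(i < l) dg 0 (s i)) * ext_act U v s.
Proof.
rewrite /ext_act mulr_sumr; apply: eq_bigr => s' _; rewrite mulrA; congr (_ * _).
have -> : \matrix_(i < l, j < l) (diag_mx dg *m U) (s i) (s' j) =
   diag_mx (\row_i dg 0 (s i)) *m \matrix_(i < l, j < l) U (s i) (s' j).
  by apply/matrixP => i j; rewrite !mul_diag_mx !mxE.
by rewrite det_mulmx det_diag; congr (_ * _); apply: eq_bigr => i _; rewrite mxE.
Qed.

Lemma decomposableZ d l (v : Vl R d l) c : (0 < l)%N ->
  decomposable v -> decomposable (fun s => v s * c).
Proof.
case: l v => // l v _ [A hA].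
pose D := diag_mx (\row_(j < l.+1) if j == ord0 then c else 1).
exists (A *m D) => s hs; rewrite hA // /wedge.
have -> : \matrix_(i < l.+1, j < l.+1) (A *m D) (s i) j =
          \matrix_(i < l.+1, j < l.+1) A (s i) j *m D.
  by apply/matrixP => i j; rewrite !mul_mx_diag !mxE.
rewrite det_mulmx det_diag big_ord_recl !mxE eqxx big1 ?mulr1 // => i _.
by rewrite mxE.
Qed.

End ExteriorNorm.

Section NegativePowers.
Variable R : realType.

Lemma prod_powR I (r : seq I) (P : pred I) (t : R) (f : I -> R) : 0 < t ->
  \prod_(i <- r | P i) t `^ f i = t `^ (\sum_(i <- r | P i) f i).
Proof.
move=> t0; elim/big_rec2: _ => [|i x y _ ->]; first by rewrite powRr0.
by rewrite powRD // (gt_eqF t0) implybT.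
Qed.

Lemma powRN_le1D (y e g : R) : 0 < y -> 0 <= e <= g -> y `^ (- e) <= 1 + y `^ (- g).
Proof.
move=> y0 /andP[e0 eg]; have [y1|y1] := leP 1 y.
  apply: (@le_trans _ _ 1); last by rewrite lerDl powR_ge0.
  by rewrite -[leRHS](powRr0 y); apply: ler_powR; rewrite // oppr_le0.
apply: (@le_trans _ _ (y `^ (- g))); last by rewrite lerDr.
by apply: ger_powR; rewrite ?lerN2 // y0 ltW.
Qed.

Lemma negpow_le (Y y k e g : R) : 0 < k -> 0 <= y -> k * y <= Y -> 0 < e <= g ->
  (negpow Y e <= (k `^ (- e))%:E * (1 + negpow y g))%E.
Proof.
move=> k0 y0 le_kyY /andP[e0 eg]; have g0 := lt_le_trans e0 eg.
have [->|y_neq0] := eqVneq y 0.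
  rewrite [negpow 0 g]/negpow eqxx (gt_eqF g0) addey //.
  by rewrite gt0_muley ?lte_fin ?powR_gt0 // leey.
have y_gt0 : 0 < y by rewrite lt_def y_neq0.
have Y_gt0 : 0 < Y by apply: lt_le_trans le_kyY; rewrite mulr_gt0.
rewrite /negpow (gt_eqF y_gt0) (gt_eqF Y_gt0) -EFinD -EFinM lee_fin.
apply: (@le_trans _ _ ((k * y) `^ (- e))).
  rewrite !powRN lef_pV2 ?posrE ?powR_gt0 ?mulr_gt0 //.
  by rewrite ge0_ler_powR ?nnegrE ?(ltW e0) ?(ltW Y_gt0) ?mulr_ge0 ?(ltW k0).
by rewrite (powRM _ (ltW k0) y0) ler_pM2l ?powR_gt0 // powRN_le1D // (ltW e0).
Qed.

Lemma negpow_ge0 (x g : R) : (0 <= negpow x g)%E.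
Proof. by rewrite /negpow; case: ifP => _; [case: ifP|rewrite lee_fin powR_ge0]. Qed.

End NegativePowers.

Section Exponents.
Variables (R : realType) (m n : nat) (a : 'I_m -> R) (b : 'I_n -> R).
Hypothesis a_dec : forall i i' : 'I_m, (i <= i')%N -> a i' <= a i.
Hypothesis b_dec : forall j j' : 'I_n, (j <= j')%N -> b j' <= b j.
Hypothesis a_sum : \sum_(i < m) a i = 1.

Definition exponent (k : 'I_(m + n)) : R :=
  match fintype.split k with inl i => a i | inr j => - b j end.

Lemma gtE t : gt a b t = diag_mx (\row_k t `^ exponent k).
Proof. by congr diag_mx; apply/rowP => k; rewrite !mxE /exponent; case: fintype.split. Qed.

Section IncreasingSubset.
Variables (l : nat) (s : {ffun 'I_l -> 'I_(m + n)}).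
Hypothesis s_incr : incr s.

Lemma weight_le_sum_exponent_small : (l <= m)%N -> (forall k, s k < m)%N ->
  weight a b l <= \sum_(k < l) exponent (s k).
Proof.
move=> le_lm s_lt_m; have e : (m - l + l = m)%N by rewrite subnK.
rewrite /weight le_lm big_mkcond (big_ord_cast_split e) big1 ?add0r => [|i _]; last first.
  by rewrite /= leqNgt ltn_ord.
apply: ler_sum => k _; rewrite /= leq_addr.
have lt_last : (l.-1 < l)%N by rewrite ltn_predL (leq_ltn_trans _ (ltn_ord k)).
have gap : (s k + (l.-1 - k) <= s (Ordinal lt_last))%N.
  by apply: incr_gap; move: (ltn_ord k) => /=; lia.
have := s_lt_m (Ordinal lt_last); rewrite /exponent.
case: (splitP (s k)) => [i /= si|j /= sj] ?; last by have := s_lt_m k; rewrite sj; lia.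
by apply: a_dec; move: gap (ltn_ord k) => /=; lia.
Qed.

Lemma weight_le_sum_exponent_large : (m < l <= m + n)%N ->
  (forall k : 'I_l, (s k < m) = (k < m))%N ->
  weight a b l <= \sum_(k < l) exponent (s k).
Proof.
case/andP=> lt_ml le_lmn lt_m; have e : (m + (l - m) = l)%N by rewrite subnKC // ltnW.
have le_lm_n : (l - m <= n)%N by lia.
rewrite /weight leqNgt lt_ml /= (big_ord_cast_split e) -a_sum big_ord_narrow -sumrN.
apply: lerD; apply: ler_sum; [move=> i _|move=> j _]; rewrite /exponent.
- have lt_m1 : (m.-1 < l)%N by apply: leq_ltn_trans lt_ml; rewrite leq_pred.
  set k := cast_ord e (lshift (l - m) i).
  have gap : (s k + (m.-1 - k) <= s (Ordinal lt_m1))%N.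
    by apply: incr_gap; move: (ltn_ord i) => /=; lia.
  have := lt_m (Ordinal lt_m1); have := lt_m k.
  case: (splitP (s k)) => [i' /= si'|j' /= sj']; have := ltn_ord i; last by lia.
  by move=> *; apply: a_dec; move: gap => /=; lia.
- set k := cast_ord e (rshift m j).
  have := incr_ge s_incr k; have := lt_m k.
  case: (splitP (s k)) => [i' /= si'|j' /= sj']; first by lia.
  by move=> *; rewrite lerN2; apply: b_dec => /=; lia.
Qed.

Lemma weight_le_sum_exponent : #|[set k : 'I_l | (s k < m)%N]| = minn l m ->
  weight a b l <= \sum_(k < l) exponent (s k).
Proof.
move=> count_m.
have /(incr_lt_countE s_incr) lt_m : #|[set k | (s k < m)%N]%SET| = minn l m.
  by rewrite -count_m; apply: eq_card => k; rewrite inE; apply/idP/idP; rewrite in_setE.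
have [le_lm|lt_ml] := leqP l m.
  by apply: weight_le_sum_exponent_small => // k; rewrite lt_m (minn_idPl le_lm).
apply: weight_le_sum_exponent_large => [|k]; last by rewrite lt_m (minn_idPr (ltnW lt_ml)).
have lt_last : (l.-1 < l)%N by rewrite ltn_predL (leq_ltn_trans _ lt_ml).
by move: (incr_ge s_incr (Ordinal lt_last)) (ltn_ord (s (Ordinal lt_last))) => /=; lia.
Qed.

End IncreasingSubset.

Lemma vnorm_proj_plus_le l (U : 'M[R]_(m + n)) (v : Vl R (m + n) l) t : 1 <= t ->
  t `^ weight a b l * vnorm (proj_plus (ext_act U v)) <= vnorm (ext_act (gt a b t *m U) v).
Proof.
move=> t1; have t0 : 0 < t := lt_le_trans ltr01 t1.
rewrite mulrC -ler_pdivlMr ?powR_gt0 //.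
apply: vnorm_le => [|s s_incr]; first by rewrite divr_ge0 ?vnorm_ge0 ?powR_ge0.
rewrite /proj_plus; case: ifP => [/eqP count_m|_]; last first.
  by rewrite normr0 divr_ge0 ?vnorm_ge0 ?powR_ge0.
rewrite ler_pdivlMr ?powR_gt0 //; apply: le_trans (normr_le_vnorm _ s_incr).
rewrite gtE ext_act_diag_mul normrM mulrC ler_wpM2r //.
under eq_bigr => i _ do rewrite mxE.
rewrite prod_powR // ger0_norm ?powR_ge0 //; apply: ler_powR => //.
exact: weight_le_sum_exponent.
Qed.

Lemma integral_negpow_flow_le l (P : probability (MatM R m n) R) (e g C : R) :
  (0 < l)%N -> 0 < e -> e < g ->
  (forall u : Vl R (m + n) l, decomposable u -> vnorm u = 1 ->
    (\int[P]_(x in setT) negpow (vnorm (proj_plus (ext_act (uu x) u))) g <= C%:E)%E) ->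
  forall t, 1 <= t -> forall v : Vl R (m + n) l, decomposable v -> vnonzero v ->
  (\int[P]_(x in setT) negpow (vnorm (ext_act (gt a b t *m uu x) v)) e
     <= ((1 + C) * t `^ (- (weight a b l * e)) * vnorm v `^ (- e))%:E)%E.
Proof.
move=> l0 e0 eg HC t t1 v v_dec v_nz.
have t0 : 0 < t := lt_le_trans ltr01 t1.
have nu0 := vnorm_gt0 v_nz.
pose u s := v s * (vnorm v)^-1.
have u1 : vnorm u = 1 by rewrite vnormZ ?invr_ge0 ?(ltW nu0) // divff ?gt_eqF.
pose k := t `^ weight a b l * vnorm v.
have k0 : 0 < k by rewrite mulr_gt0 ?powR_gt0.
pose G x := negpow (vnorm (proj_plus (ext_act (uu x) u))) g.
apply: (@le_trans _ _ ((k `^ (- e))%:E * (1 + \int[P]_x G x))%E).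
  apply: integral_le_affine => [|x|x|x]; rewrite ?powR_gt0 ?negpow_ge0 //.
  apply: negpow_le; rewrite ?vnorm_ge0 ?e0 ?(ltW eg) //.
  rewrite ext_actZ proj_plusZ vnormZ ?invr_ge0 ?(ltW nu0) //.
  rewrite /k -mulrA [vnorm v * _]mulrCA divff ?gt_eqF // mulr1.
  exact: vnorm_proj_plus_le.
apply: (@le_trans _ _ ((k `^ (- e))%:E * (1 + C%:E))%E).
  by rewrite lee_pmul2l ?lte_fin ?powR_gt0 // leeD2l //; apply: HC u1; exact: decomposableZ.
rewrite -EFinD -EFinM lee_fin /k (powRM _ (powR_ge0 _ _) (ltW nu0)) -powRrM.
by rewrite mulrN mulrC mulrA.
Qed.

End Exponents.

Theorem proposition5p1
  (R : realType) (m n : nat) (hm : (0 < m)%N) (hn : (0 < n)%N)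
  (a : 'I_m -> R) (b : 'I_n -> R)
  (a_pos : forall i, 0 < a i) (b_pos : forall j, 0 < b j)
  (a_dec : forall i i' : 'I_m, (i <= i')%N -> a i' <= a i)
  (b_dec : forall j j' : 'I_n, (j <= j')%N -> b j' <= b j)
  (a_sum : \sum_(i < m) a i = 1) (b_sum : \sum_(j < n) b j = 1)
  (* the IFS Phi_ij = { x |-> c_ij x + w_ij e : e < N_ij } *)
  (N : 'I_m -> 'I_n -> nat) (c : 'I_m -> 'I_n -> R)
  (w : forall i j, 'I_(N i j) -> R)
  (c_pos : forall i j, 0 < c i j) (c_lt1 : forall i j, c i j < 1)
  (osc : forall i j, OSC (c i j) (w i j))
  (K : 'I_m -> 'I_n -> set R)
  (K_lim : forall i j, limit_set (c i j) (w i j) (K i j))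
  (s : 'I_m -> 'I_n -> R)
  (s_dim : forall i j, hdim (K i j) = (s i j)%:E)
  (s_pos : forall i j, 0 < s i j)
  (mu : 'I_m -> 'I_n -> probability R R)
  (mu_haus : forall i j, normalised_hausdorff (s i j) (K i j) (mu i j))
  (* P r is the product measure mu^(r) = \bigotimes_ij (x |-> r_ij x)_* mu_ij *)
  (P : 'M[R]_(m, n) -> probability (MatM R m n) R)
  (P_prod : forall r : 'M[R]_(m, n), is_product_measure
       (fun i j => pushforward (mu i j) (fun x : R => r i j * x)) (P r))
  (eta : nat -> R)
  (eta_pos : forall l, (1 <= l <= m + n - 1)%N -> 0 < eta l)
  (eta_lt : forall l, (1 <= l <= m + n - 1)%N ->
      ((eta l)%:E < crit_exp c (fun r => P r) l)%E) :
  let etamin := \big[Num.min/weight a b 1 * eta 1]_(1 <= l < m + n)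
                    (weight a b l * eta l) in
  exists C : R, 0 < C /\
    forall l : nat, (1 <= l <= m + n - 1)%N ->
    forall r : 'M[R]_(m, n), Xi c r ->
    forall t : R, 1 < t ->
    forall v : Vl R (m + n) l, decomposable v -> vnonzero v ->
      (\int[P r]_(x in setT) negpow (vnorm (ext_act (gt a b t *m uu x) v)) (eta l)
         <= (C * t `^ (- etamin) * vnorm v `^ (- eta l))%:E)%E.
Proof.
move=> etamin.
have bound l : exists C : R, 0 < C /\ ((1 <= l <= m + n - 1)%N ->
    forall r, Xi c r -> forall t, 1 < t -> forall v : Vl R (m + n) l,
    decomposable v -> vnonzero v ->
    (\int[P r]_(x in setT) negpow (vnorm (ext_act (gt a b t *m uu x) v)) (eta l)
       <= (C * t `^ (- (weight a b l * eta l)) * vnorm v `^ (- eta l))%:E)%E).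
  have [hl|hl] := boolP (1 <= l <= m + n - 1)%N; last by exists 1; split=> // /(negP hl).
  have /ereal_sup_gt[_ [g [g0 [C [C0 HC]]] <-]] := eta_lt l hl; rewrite lte_fin => eta_g.
  exists (1 + C); split=> [|_ r /HC HCr t t1]; first by rewrite addr_gt0.
  apply: (integral_negpow_flow_le a_dec b_dec a_sum (g := g)) (ltW t1) => //.
  - by case/andP: hl.
  - exact: eta_pos.
  - by move=> u du u1; apply/ltW/HCr.
have [C HC] := choice bound; have C0 l : 0 < C l by case: (HC l).
exists (1 + \sum_(l < m + n) C l); split=> [|l hl r hr t t1 v dv vn].
  by rewrite ltr_wpDr ?sumr_ge0 // => l _; apply/ltW.
apply: le_trans ((HC l).2 hl r hr t t1 v dv vn) _; rewrite lee_fin ler_wpM2r ?powR_ge0 //.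
have lt_lmn : (l < m + n)%N by case/andP: hl => _; lia.
apply: ler_pM; rewrite ?powR_ge0 ?(ltW (C0 l)) //.
  rewrite (bigD1 (Ordinal lt_lmn)) //= addrCA lerDl addr_ge0 ?sumr_ge0 // => i _.
  exact/ltW.
apply: ler_powR; rewrite ?(ltW t1) // lerN2.
by apply: ge_bigmin_seq => //; rewrite mem_index_iota; lia.
Qed.
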